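(* Let $G=(V,E,p,(V_{E},V_{O}))$ be a parity game and let $\rho: V\to\mathbb{M}$ be a game parity progress measure of $G$. Then for every vertex $v\in V$ there is a positional strategy $\sigma_{E}$ of player Even such that every play $\pi$ starting in $v$ and consistent with $\sigma_{E}$ satisfies $\theta(\pi)\le\rho(v)$.
   Context: A parity game $G=(V,E,p,(V_{E},V_{O}))$ consists of a finite set $V$ of vertices partitioned into $V_{E}$ (owned by player Even) and $V_{O}$ (owned by player Odd), a total edge relation $E\subseteq V\times V$ (every vertex has a successor), and a priority function $p:V\to\mathbb{N}$. Write $\mathrm{post}(v)=\{w:(v,w)\in E\}$ and $V_i=\{v: p(v)=i\}$. A play is an infinite path $\pi=\pi_0\pi_1\cdots$ in the graph; Even wins it iff the least priority occurring infinitely often is even, otherwise Odd wins it. A strategy of player $X$ is a partial function $\sigma:V^+\to V$, defined only on finite paths $u_1\cdots u_n$ with $u_n$ owned by $X$, and then $\sigma(u_1\cdots u_n)\in\mathrm{post}(u_n)$; it is positional if its value depends only on the last vertex. A play is consistent with $\sigma$ if $u_{n+1}=\sigma(u_1\cdots u_n)$ whenever the latter is defined. Let $d$ be one more than the largest priority in $G$. $\mathbb{M}$ is the set consisting of an extra element $\top$ together with all tuples $(m_0,\dots,m_{d-1})\in\mathbb{N}^d$ with $m_i=0$ for even $i$ and $m_i\le|V_i|$ for odd $i$; $\mathbb{M}_{ext}$ is $\{\top\}$ together with all tuples in $\mathbb{N}^d$ that are $0$ at even positions. Tuples are ordered lexicographically and $\top$ is strictly greater than every tuple. For a position $i$, $m<_i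 m'$ means $(m_0,\dots,m_i)<(m'_0,\dots,m'_i)$ lexicographically (with $\alpha<_i\top$ for tuples $\alpha$ and $\top=_i\top$), and $m=_i m'$ means the tuples agree on positions $0,\dots,i$; $\le_i,\ge_i,>_i$ are derived accordingly. For $\rho:V\to\mathbb{M}$ and $w\in\mathrm{post}(v)$, $\mathrm{Prog}(\rho,v,w)$ is the least $m\in\mathbb{M}$ such that $m\ge_{p(v)}\rho(w)$ if $p(v)$ is even, and such that $m>_{p(v)}\rho(w)$ or $m=\rho(w)=\top$ if $p(v)$ is odd. $\rho$ is a game parity progress measure if for every $v\in V_{E}$ there is $w\in\mathrm{post}(v)$ with $\rho(v)\ge_{p(v)}\mathrm{Prog}(\rho,v,w)$, and for every $v\in V_{O}$ and all $w\in\mathrm{post}(v)$, $\rho(v)\ge_{p(v)}\mathrm{Prog}(\rho,v,w)$. Play value: a stretch of a play is a finite contiguous subsequence; for a priority $k$, a $k$-dominated stretch is one whose minimal priority is $k$, and its degree is the number of its vertices of priority $k$. The value $\theta(\pi)\in\mathbb{M}_{ext}$ of a play $\pi$ is $\top$ if Odd wins $\pi$; otherwise it is the tuple which is $0$ at even positions and whose entry at each odd position $i$ is the degree of the maximal $i$-dominated stretch that is a prefix of $\pi$ (and $0$ if no prefix is $i$-dominated). *)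

From mathcomp Require Import all_boot all_order.
Set Implicit Arguments. Unset Strict Implicit. Unset Printing Implicit Defensive.

(** Elements of M_ext: [Top] is the extra element ⊤; [Tup f] is the tuple
    (f 0, ..., f (d-1)).  To make the representation canonical, positions
    >= d are required to be 0 (see [inMext]). *)
Inductive mval := Top | Tup of (nat -> nat).

Section ParityGame.
Variables (V : finType) (E : rel V) (isEven : pred V) (p : V -> nat).
(* V_E = [isEven], V_O = complement of [isEven]. *)

Definition dd : nat := (\max_(v : V) p v).+1.

Definition cardVi (i : nat) : nat := #|[set v : V | p v == i]|.

Definition inMext (m : mval) : Prop :=
  match m with
  | Top => True
  | Tup f => forall i, (~~ odd i \/ dd <= i) -> f i = 0
  end.

Definition inM (m : mval) : Prop :=
  inMext m /\
  match m with
  | Top => True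
  | Tup f => forall i, odd i -> i < dd -> f i <= cardVi i
  end.

Definition lt_upto (i : nat) (f g : nat -> nat) : Prop :=
  exists j, j <= i /\ (forall k, k < j -> f k = g k) /\ f j < g j.
Definition eq_upto (i : nat) (f g : nat -> nat) : Prop :=
  forall k, k <= i -> f k = g k.

Definition mlt (i : nat) (m m' : mval) : Prop :=
  match m, m' with
  | Tup f, Tup g => lt_upto i f g
  | Tup _, Top => True
  | Top, _ => False
  end.
Definition meq (i : nat) (m m' : mval) : Prop :=
  match m, m' with
  | Tup f, Tup g => eq_upto i f g
  | Top, Top => True
  | _, _ => False
  end.
Definition mle (i : nat) (m m' : mval) : Prop := mlt i m m' \/ meq i m m'.

Definition mle_full (m m' : mval) : Prop := mle dd.-1 m m'.

Definition prog_cond (rho : V -> mval) (v w : V) (m : mval) : Prop :=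
  if ~~ odd (p v) then mle (p v) (rho w) m
  else mlt (p v) (rho w) m \/ (m = Top /\ rho w = Top).

Definition is_Prog (rho : V -> mval) (v w : V) (m : mval) : Prop :=
  inM m /\ prog_cond rho v w m /\
  forall m', inM m' -> prog_cond rho v w m' -> mle_full m m'.

Definition game_progress_measure (rho : V -> mval) : Prop :=
  (forall v, inM (rho v)) /\
  (forall v, isEven v ->
     exists2 w, E v w & forall m, is_Prog rho v w m -> mle (p v) m (rho v)) /\
  (forall v, ~~ isEven v ->
     forall w, E v w -> forall m, is_Prog rho v w m -> mle (p v) m (rho v)).

Definition is_play (pi : nat -> V) : Prop := forall n, E (pi n) (pi n.+1).

(** positional strategy of Even (only its values on Even vertices matter) *)
Definition positional_strategy_E (sigma : V -> V) : Prop :=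
  forall v, isEven v -> E v (sigma v).

Definition consistent_E (sigma : V -> V) (pi : nat -> V) : Prop :=
  forall n, isEven (pi n) -> pi n.+1 = sigma (pi n).

Definition inf_often (pi : nat -> V) (k : nat) : Prop :=
  forall N, exists n, N <= n /\ p (pi n) = k.

Definition even_wins (pi : nat -> V) : Prop :=
  exists k, inf_often pi k /\ ~~ odd k /\ forall k', inf_often pi k' -> k <= k'.

Definition odd_wins (pi : nat -> V) : Prop := ~ even_wins pi.

Definition idom_prefix (pi : nat -> V) (i n : nat) : Prop :=
  0 < n /\ (exists k, k < n /\ p (pi k) = i) /\ (forall k, k < n -> i <= p (pi k)).

Definition degree (pi : nat -> V) (i n : nat) : nat :=
  count (fun k => p (pi k) == i) (iota 0 n).

Definition theta_entry (pi : nat -> V) (i c : nat) : Prop :=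
  (exists n, idom_prefix pi i n /\ degree pi i n = c /\
     forall n', idom_prefix pi i n' -> degree pi i n' <= c)
  \/ ((forall n, ~ idom_prefix pi i n) /\ c = 0).

Definition is_theta (pi : nat -> V) (t : mval) : Prop :=
  (odd_wins pi /\ t = Top) \/
  (~ odd_wins pi /\ exists f, t = Tup f /\
      (forall i, odd i -> i < dd -> theta_entry pi i (f i)) /\
      (forall i, (~~ odd i \/ dd <= i) -> f i = 0)).

End ParityGame.

From mathcomp Require Import all_boot all_order zify.
From Stdlib Require Import Classical ClassicalEpsilon.
Set Implicit Arguments. Unset Strict Implicit. Unset Printing Implicit Defensive.

(* Even moves, at each of her vertices, along an edge witnessing the progress
   measure condition.  Along any play consistent with this strategy the measure
   is then nonincreasing in the lexicographic order truncated at the current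
   priority, strictly so at odd priorities.  If it starts at ⊤ there is nothing
   to show; otherwise it stays a tuple forever.  Past the point after which only
   priorities >= k occur, k the least priority seen infinitely often, the
   truncations at k of the measure stabilise, so k cannot be odd: Even wins.
   Finally, each visit to an odd priority i inside an i-dominated stretch
   decreases the measure at position i while not increasing it before i, so by
   induction on i the play value lies below the initial measure. *)

Lemma ex_minimal (P : nat -> Prop) :
  (exists n, P n) -> exists n, P n /\ forall m, P m -> n <= m.
Proof.
move=> [n Pn]; elim/ltn_ind: n Pn => n IH Pn.
case: (classic (exists m, P m /\ m < n)) => [[m [Pm lt_mn]]|no_lt]; first exact: IH lt_mn Pm.
exists n; split=> // m Pm; rewrite leqNgt; apply/negP => lt_mn; apply: no_lt; by exists m.
Qed.

Lemma ex_maximal (P : nat -> Prop) B :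
  (exists c, P c) -> (forall c, P c -> c <= B) -> exists c, P c /\ forall c', P c' -> c' <= c.
Proof.
move=> [c Pc] leB.
have [d [[c0 [Pc0 ->]] minB]] :=
  @ex_minimal (fun d => exists c, P c /\ d = B - c) (ex_intro _ _ (ex_intro _ c (conj Pc erefl))).
exists c0; split=> // c' Pc'.
have := minB (B - c') (ex_intro _ c' (conj Pc' erefl)); have := leB _ Pc'; have := leB _ Pc0; lia.
Qed.

Lemma nonincreasing_stable (a : nat -> nat) N :
  (forall n, N <= n -> a n.+1 <= a n) -> exists2 N', N <= N' & forall n, N' <= n -> a n = a N'.
Proof.
move=> a_dec.
have mono k n : N <= n -> a (n + k) <= a n.
  move=> Nn; elim: k => [|k IH]; first by rewrite addn0.
  by rewrite addnS; apply: leq_trans (a_dec _ _) IH; lia.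
have [v [[N' NN' <-] vmin]] :=
  @ex_minimal (fun v => exists2 n, N <= n & a n = v) (ex_intro _ _ (ex_intro2 _ _ N (leqnn N) erefl)).
exists N' => // n N'n; apply/eqP; rewrite eqn_leq.
have -> /= : a n <= a N' by rewrite -(subnKC N'n); apply: mono.
by apply: vmin; exists n => //; lia.
Qed.

Definition le_upto (i : nat) (f g : nat -> nat) : Prop := lt_upto i f g \/ eq_upto i f g.

Section LexUpto.
Implicit Types (i j q : nat) (f g h : nat -> nat).

Lemma lt_upto_trans i f g h : lt_upto i f g -> lt_upto i g h -> lt_upto i f h.
Proof.
move=> [j1 [j1i [eq1 lt1]]] [j2 [j2i [eq2 lt2]]].
have eq12 k : k < minn j1 j2 -> f k = h k by move=> kj; rewrite eq1 ?eq2 //; lia.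
case: (ltngtP j1 j2) => j12.
- by exists j1; split=> //; split; [move=> k kj; apply: eq12; lia | rewrite -(eq2 _ j12)].
- by exists j2; split=> //; split; [move=> k kj; apply: eq12; lia | rewrite (eq1 _ j12)].
- exists j1; split=> //; split; [move=> k kj; apply: eq12; lia | rewrite -j12 in lt2; lia].
Qed.

Lemma lt_eq_upto_trans i f g h : lt_upto i f g -> eq_upto i g h -> lt_upto i f h.
Proof.
move=> [j [ji [eq_j lt_j]]] eq_gh; exists j; split=> //; split; last by rewrite -eq_gh.
by move=> k kj; rewrite eq_j // eq_gh //; lia.
Qed.

Lemma eq_lt_upto_trans i f g h : eq_upto i f g -> lt_upto i g h -> lt_upto i f h.
Proof.
move=> eq_fg [j [ji [eq_j lt_j]]]; exists j; split=> //; split; last by rewrite eq_fg.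
by move=> k kj; rewrite eq_fg ?eq_j //; lia.
Qed.

Lemma eq_upto_trans i f g h : eq_upto i f g -> eq_upto i g h -> eq_upto i f h.
Proof. by move=> eq_fg eq_gh k ki; rewrite eq_fg ?eq_gh. Qed.

Lemma le_upto_trans i f g h : le_upto i f g -> le_upto i g h -> le_upto i f h.
Proof.
move=> [fg|fg] [gh|gh].
- by left; apply: lt_upto_trans fg gh.
- by left; apply: lt_eq_upto_trans fg gh.
- by left; apply: eq_lt_upto_trans fg gh.
- by right; apply: eq_upto_trans fg gh.
Qed.

Lemma lt_le_upto_trans i f g h : lt_upto i f g -> le_upto i g h -> lt_upto i f h.
Proof. by move=> fg [gh|gh]; [apply: lt_upto_trans fg gh | apply: lt_eq_upto_trans fg gh]. Qed.

Lemma le_eq_upto_trans i f g h : le_upto i f g -> eq_upto i g h -> le_upto i f h.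
Proof. by move=> [fg|fg] gh; [left; apply: lt_eq_upto_trans fg gh | right; apply: eq_upto_trans fg gh]. Qed.

Lemma lt_upto_not_eq i f g h : lt_upto i f g -> eq_upto i f h -> ~ eq_upto i g h.
Proof. by move=> [j [ji [_ lt_j]]] eq_fh eq_gh; move: lt_j; rewrite eq_fh // eq_gh // ltnn. Qed.

Lemma le_upto_weaken i q f g : i <= q -> le_upto q f g -> le_upto i f g.
Proof.
move=> iq [[j [jq [eq_j lt_j]]]|eq_fg].
- case: (leqP j i) => ji; first by left; exists j.
  by right=> k ki; apply: eq_j; lia.
- by right=> k ki; apply: eq_fg; lia.
Qed.

Lemma le_upto_coord i j f g :
  le_upto i f g -> j <= i -> (forall c, c < j -> f c = g c) -> f j <= g j.
Proof.
move=> [[d [di [eq_d lt_d]]]|eq_fg] ji eq_j; last by rewrite eq_fg.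
case: (ltngtP d j) => dj; [by move: lt_d; rewrite eq_j ?ltnn | by rewrite eq_d | by rewrite -dj ltnW].
Qed.

Lemma le_upto_pointwise i f g : (forall k, k <= i -> f k <= g k) -> le_upto i f g.
Proof.
move=> le_fg.
case: (classic (exists k, k <= i /\ f k <> g k)) => [neq|all_eq]; last first.
  right=> k ki; apply: NNPP => neq; apply: all_eq; by exists k.
have [d [[di neq_d] dmin]] := ex_minimal neq.
left; exists d; split=> //; split.
- move=> k kd; apply: NNPP => neq_k; have := dmin k (conj (ltnW (leq_trans kd di)) neq_k); lia.
- by have := le_fg d di; lia.
Qed.

Lemma le_upto_extend q i f g :
  le_upto q f g -> q < i -> (forall k, q < k <= i -> f k <= g k) -> le_upto i f g.
Proof.
move=> [[d [dq lt_d]]|eq_fg] qi le_fg; first by left; exists d; split=> //; lia.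
apply: le_upto_pointwise => k ki; case: (leqP k q) => kq; first by rewrite eq_fg.
by apply: le_fg; lia.
Qed.

Lemma le_upto_min_exists (S : (nat -> nat) -> Prop) i :
  (exists f, S f) -> exists2 f, S f & forall g, S g -> le_upto i f g.
Proof.
move=> [f0 Sf0]; elim: i => [|i [f Sf fmin]].
  have [c [[f [Sf <-]] cmin]] :=
    @ex_minimal (fun c => exists f, S f /\ f 0 = c) (ex_intro _ _ (ex_intro _ f0 (conj Sf0 erefl))).
  exists f => // g Sg; apply: le_upto_pointwise => k; rewrite leqn0 => /eqP ->.
  exact: cmin (ex_intro _ g (conj Sg erefl)).
have [c [[f' [Sf' [eq_ff' <-]]] cmin]] :=
  @ex_minimal (fun c => exists g, S g /\ eq_upto i f g /\ g i.+1 = c)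
    (ex_intro _ _ (ex_intro _ f (conj Sf (conj (fun k _ => erefl) erefl)))).
exists f' => // g Sg.
have [[d [di [eq_d lt_d]]]|eq_fg] := fmin g Sg.
- left; exists d; split; first lia; split; last by rewrite -eq_ff'.
  by move=> k kd; rewrite -eq_ff' ?eq_d //; lia.
- apply: (le_upto_extend (q := i)) => //; first by right; apply: eq_upto_trans eq_fg => k ki; rewrite eq_ff'.
  move=> k /andP [ik ki]; have -> : k = i.+1 by lia.
  exact: cmin (ex_intro _ g (conj Sg (conj eq_fg erefl))).
Qed.

Lemma le_upto_stable i (f : nat -> nat -> nat) N :
  (forall n, N <= n -> le_upto i (f n.+1) (f n)) ->
  exists2 N', N <= N' & forall n, N' <= n -> eq_upto i (f n) (f N').
Proof.
move=> f_dec.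
have prefix j : j <= i.+1 ->
    exists2 N', N <= N' & forall n, N' <= n -> forall c, c < j -> f n c = f N' c.
  elim: j => [|j IH] ji; first by exists N.
  have [Nj NNj stable_j] := IH (ltnW ji).
  have [N' NjN' stable'] := @nonincreasing_stable (f^~ j) Nj
    (fun n Njn => le_upto_coord (f_dec n (leq_trans NNj Njn)) (ji : j <= i)
       (fun c cj => etrans (stable_j n.+1 (leqW Njn) c cj) (esym (stable_j n Njn c cj)))).
  exists N'; first lia.
  move=> n N'n c; rewrite ltnS leq_eqVlt => /orP [/eqP ->|cj]; first exact: stable'.
  by rewrite stable_j ?(stable_j N') //; lia.
have [N' NN' stable] := prefix i.+1 (leqnn _).
by exists N' => // n N'n k ki; apply: stable.
Qed.

End LexUpto.

Definition incr_at (i c : nat) (f : nat -> nat) : nat -> nat :=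
  fun k => if k == i then f k + c else f k.

Lemma incr_at_eq_upto q i c f : q < i -> eq_upto q f (incr_at i c f).
Proof. by move=> qi k kq; rewrite /incr_at; case: eqP => // ki; lia. Qed.

Lemma le_upto_incr0 i f : le_upto i (incr_at i 0 f) f.
Proof. by right=> k _; rewrite /incr_at addn0 if_same. Qed.

Lemma le_upto_incr i c f g : le_upto i f g -> le_upto i (incr_at i c f) (incr_at i c g).
Proof.
rewrite /incr_at => -[[d [di [eq_d lt_d]]]|eq_fg]; last by right=> k ki; rewrite eq_fg.
left; exists d; split=> //; split; last by case: eqP; lia.
by move=> k kd; rewrite eq_d //; case: eqP; lia.
Qed.

Lemma lt_upto_incrS i c f g : lt_upto i f g -> le_upto i (incr_at i c.+1 f) (incr_at i c g).
Proof.
move=> [d [di [eq_d lt_d]]].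
have eq_below k : k < d -> incr_at i c.+1 f k = incr_at i c g k.
  by move=> kd; rewrite /incr_at eq_d //; case: eqP; lia.
case: (ltnP d i) => [dlt|dge].
  left; exists d; split=> //; split=> //; rewrite /incr_at; case: eqP; lia.
have {dge di} d_eq : d = i by lia.
subst d.
apply: le_upto_pointwise => k ki; case: (ltngtP k i) => [kli|ik|->]; [by rewrite eq_below | lia |].
by rewrite /incr_at eqxx; lia.
Qed.

Lemma priority_lt_dd (V : finType) (p : V -> nat) (x : V) : p x < dd p.
Proof. by rewrite /dd ltnS; apply: leq_bigmax. Qed.

Section Play.
Variables (V : finType) (p : V -> nat) (pi : nat -> V).

Definition occ (i n m : nat) : nat := count (fun k => p (pi k) == i) (iota n (m - n)).

Lemma occ_cat i n L m : n <= L -> L <= m -> occ i n m = occ i n L + occ i L m.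
Proof.
move=> nL Lm; rewrite /occ; have -> : m - n = L - n + (m - L) by lia.
by rewrite iotaD count_cat; congr (_ + count _ (iota _ _)); lia.
Qed.

Lemma occS i n m : n <= m -> occ i n m.+1 = occ i n m + (p (pi m) == i).
Proof. by move=> nm; rewrite (@occ_cat i n m m.+1) // /occ subSnn /= addn0. Qed.

Lemma occ_nn i n : occ i n n = 0.
Proof. by rewrite /occ subnn. Qed.

Lemma occ_eq0 i n m : (forall k, n <= k < m -> p (pi k) != i) -> occ i n m = 0.
Proof.
move=> ne_i; apply/eqP; rewrite -leqn0 leqNgt -has_count; apply/hasPn => k.
by rewrite mem_iota => /andP [nk km]; apply: ne_i; rewrite nk /=; lia.
Qed.

Lemma leq_occ i n m m' : n <= m -> m <= m' -> occ i n m <= occ i n m'.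
Proof. by move=> nm mm'; rewrite (@occ_cat i n m m') // leq_addr. Qed.

Lemma degree_occ i n : degree p pi i n = occ i 0 n.
Proof. by rewrite /degree /occ subn0. Qed.

Definition window_bound (h : nat -> nat) (n j : nat) : Prop :=
  exists2 m, n <= m & (forall k, n <= k < m -> j <= p (pi k)) /\ h j <= occ j n m.

Lemma window_bound_shift h n L j : n <= L -> (forall k, n <= k < L -> j < p (pi k)) ->
  window_bound h n j -> window_bound h L j.
Proof.
move=> nL gt_j [m nm [ge_j hj]].
have occ_nL : occ j n L = 0 by apply: occ_eq0 => k /gt_j; lia.
case: (leqP m L) => mL.
  exists L => //; split=> [k|]; first lia.
  by rewrite occ_nn; have := leq_occ j nm mL; lia.
exists m; first exact: ltnW.
split; first by move=> k kk; apply: ge_j; lia.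
by rewrite (occ_cat j nL (ltnW mL)) occ_nL in hj.
Qed.

Lemma window_bound_before h n L j : n <= L -> p (pi L) < j ->
  window_bound h n j -> h j <= occ j n L.
Proof.
move=> nL lt_j [m nm [ge_j hj]]; apply: leq_trans hj (leq_occ j nm _).
by rewrite leqNgt; apply/negP => Lm; have := ge_j L; rewrite nL Lm => /(_ isT); lia.
Qed.

Lemma window_bound_theta_entry h j : theta_entry p pi j (h j) -> window_bound h 0 j.
Proof.
case=> [[n [[_ [_ ge_j]] [deg_n _]]]|[_ h0]]; last by exists 0 => //; split=> [k|]; [lia | rewrite h0].
exists n => //; split; first by move=> k /andP [_ kn]; apply: ge_j.
by rewrite -deg_n degree_occ.
Qed.

Lemma eventually_priority_ge m : (forall k, k < m -> ~ inf_often p pi k) ->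
  exists N, forall n, N <= n -> m <= p (pi n).
Proof.
elim: m => [|m IH] not_inf; first by exists 0.
have [N1 ge_m] := IH (fun k km => not_inf k (ltnW km)).
have [N2 no_m] := not_all_ex_not _ _ (not_inf m (ltnSn m)).
exists (maxn N1 N2) => n Nn; have := ge_m n (leq_trans (leq_maxl _ _) Nn).
case: (eqVneq (p (pi n)) m) => [pn|]; last lia.
by case: no_m; exists n; split=> //; apply: leq_trans (leq_maxr _ _) Nn.
Qed.

Lemma inf_often_exists : exists k, inf_often p pi k.
Proof.
apply: NNPP => none; have [N ge_dd] := @eventually_priority_ge (dd p) (fun k _ Ik => none (ex_intro _ k Ik)).
by have := ge_dd N (leqnn N); rewrite leqNgt priority_lt_dd.
Qed.

Lemma idom_degree_bounded i : even_wins p pi -> odd i ->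
  exists B, forall n, idom_prefix p pi i n -> degree p pi i n <= B.
Proof.
move=> [k [Ik [Ek kmin]]] Oi.
case: (classic (inf_often p pi i)) => [Ii|not_Ii].
  have ki : k < i.
    rewrite ltn_neqAle kmin // andbT; apply/eqP => ki; by rewrite ki Oi in Ek.
  have [L [_ pL]] := Ik 0.
  exists (occ i 0 L) => n [_ [_ ge_i]]; rewrite degree_occ; apply: leq_occ => //.
  by rewrite leqNgt; apply/negP => Ln; have := ge_i L Ln; lia.
have [N no_i] := not_all_ex_not _ _ not_Ii.
exists (occ i 0 N) => n _; rewrite degree_occ.
case: (leqP n N) => nN; first exact: leq_occ.
rewrite (occ_cat i (leq0n N) (ltnW nN)) (@occ_eq0 i N n) ?addn0 // => l nl.
by apply/eqP => pl; apply: no_i; exists l; split=> //; lia.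
Qed.

Lemma theta_entry_exists i : even_wins p pi -> odd i -> exists c, theta_entry p pi i c.
Proof.
move=> ew Oi.
case: (classic (exists n, idom_prefix p pi i n)) => [[n0 idom0]|no_idom]; last first.
  by exists 0; right; split=> // n idom_n; apply: no_idom; exists n.
have [B leB] := idom_degree_bounded ew Oi.
have [c [[n idom_n deg_n] cmax]] :=
  @ex_maximal (fun c => exists2 n, idom_prefix p pi i n & degree p pi i n = c) B
    (ex_intro _ _ (ex_intro2 _ _ n0 idom0 erefl)) (fun c '(ex_intro2 n idom_n deg_n) => eq_ind _ (fun c => c <= B) (leB n idom_n) _ deg_n).
exists c; left; exists n; split=> //; split=> // n' idom_n'.
by apply: cmax; exists n'.
Qed.

Lemma theta_tuple_exists : even_wins p pi ->
  exists f, (forall i, odd i -> i < dd p -> theta_entry p pi i (f i)) /\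
            (forall i, (~~ odd i \/ dd p <= i) -> f i = 0).
Proof.
move=> ew.
have entry i : exists c, (odd i -> i < dd p -> theta_entry p pi i c) /\
                         ((~~ odd i \/ dd p <= i) -> c = 0).
  case: (boolP (odd i && (i < dd p))) => [/andP [Oi lt_i]|out].
    have [c Hc] := theta_entry_exists ew Oi.
    by exists c; split=> // -[nOi|le_dd]; [rewrite Oi in nOi | lia].
  by exists 0; split=> // Oi lt_i; rewrite Oi lt_i in out.
exists (fun i => proj1_sig (constructive_indefinite_description _ (entry i))).
by split=> i; case: constructive_indefinite_description => c [? ?].
Qed.

Section Descent.
Variable G : nat -> nat -> nat.
Hypothesis G_le : forall n, le_upto (p (pi n)) (G n.+1) (G n).
Hypothesis G_lt : forall n, odd (p (pi n)) -> lt_upto (p (pi n)) (G n.+1) (G n).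

Lemma le_upto_window i n m : n <= m -> (forall k, n <= k < m -> i <= p (pi k)) ->
  le_upto i (incr_at i (if odd i then occ i n m else 0) (G m)) (G n).
Proof.
elim: m => [|m IH] nm ge_i.
  by move: nm; rewrite leqn0 => /eqP ->; rewrite occ_nn if_same; apply: le_upto_incr0.
case: (eqVneq n m.+1) => [->|n_ne]; first by rewrite occ_nn if_same; apply: le_upto_incr0.
have {}nm : n <= m by lia.
have le_step : le_upto i (G m.+1) (G m) by apply: le_upto_weaken (G_le m); apply: ge_i; lia.
apply: le_upto_trans (IH nm (fun k kk => ge_i k ltac:(lia))).
rewrite occS //; case: (boolP (odd i)) => Oi; last exact: le_upto_incr.
case: (eqVneq (p (pi m)) i) => [pm|_]; last by rewrite addn0; apply: le_upto_incr.
by rewrite addn1; apply: lt_upto_incrS; have := @G_lt m; rewrite pm Oi; apply.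
Qed.

Lemma le_upto_window_bounds_tail i n h : (forall k, n <= k -> i <= p (pi k)) ->
  (forall j, ~~ odd j -> h j = 0) -> (forall j, odd j -> j <= i -> window_bound h n j) ->
  le_upto i h (G n).
Proof.
move=> ge_i h_even h_win.
have h_lt k : k < i -> h k = 0.
  move=> ki; case: (boolP (odd k)) => Ok; last exact: h_even.
  have [m nm [_ hk]] := h_win k Ok (ltnW ki).
  move: hk; rewrite occ_eq0; first lia.
  by move=> l /andP [nl _]; have := ge_i l nl; lia.
case: (boolP (odd i)) => Oi; last first.
  apply: le_upto_pointwise => k ki.
  by case: (ltngtP k i) => [kli|ik|->]; [rewrite h_lt | lia | rewrite h_even].
have [m nm [ge_m hi]] := h_win i Oi (leqnn i).
apply: le_upto_trans (le_upto_window nm ge_m); rewrite Oi.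
apply: le_upto_pointwise => k ki.
case: (ltngtP k i) => [kli|ik|->]; [by rewrite h_lt | lia |].
by rewrite /incr_at eqxx; lia.
Qed.

(* Induction on [i]: the first later visit to a priority [q < i] cuts the
   [i]-dominated stretch, below [q] the bound is inherited from that visit, and
   between [q] and [i] only the visits to [i] itself count. *)
Lemma le_upto_window_bounds h i n : (forall j, ~~ odd j -> h j = 0) ->
  (forall j, odd j -> j <= i -> window_bound h n j) -> le_upto i h (G n).
Proof.
move=> h_even; elim/ltn_ind: i n => i IH n h_win.
case: (classic (exists L, n <= L /\ p (pi L) < i)) => [exL|noL]; last first.
  apply: le_upto_window_bounds_tail => // k nk.
  by rewrite leqNgt; apply/negP => lt_k; apply: noL; exists k.
have [L [[nL qi] Lmin]] := ex_minimal exL.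
set q := p (pi L) in qi.
have ge_i k : n <= k < L -> i <= p (pi k).
  move=> /andP [nk kL]; rewrite leqNgt; apply/negP => lt_k.
  by have := Lmin k (conj nk lt_k); lia.
have hL : le_upto q h (G L).
  apply: (IH _ qi L) => j Oj jq.
  apply: window_bound_shift nL _ (h_win j Oj (ltnW (leq_ltn_trans jq qi))).
  by move=> k /ge_i; lia.
apply: le_upto_trans (le_upto_window nL ge_i).
apply: le_upto_extend (le_eq_upto_trans hL (incr_at_eq_upto _ _ qi)) qi _.
move=> k /andP [qk ki]; case: (boolP (odd k)) => Ok; last by rewrite h_even.
have hk := window_bound_before nL qk (h_win k Ok ki).
case: (ltngtP k i) => [kli|ik|ki'].
- move: hk; rewrite occ_eq0; first lia.
  by move=> l /ge_i; lia.
- lia.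
- by subst k; rewrite /incr_at eqxx Ok; lia.
Qed.

Lemma even_wins_descent : even_wins p pi.
Proof.
have [k [Ik kmin]] := ex_minimal inf_often_exists.
case: (boolP (odd k)) => Ok; last by exists k.
have [N ge_k] : exists N, forall n, N <= n -> k <= p (pi n).
  by apply: eventually_priority_ge => j jk Ij; have := kmin j Ij; lia.
have [N' NN' stable] :=
  @le_upto_stable k G N (fun n Nn => le_upto_weaken (ge_k n Nn) (G_le n)).
have [s [N's ps]] := Ik N'.
have := @G_lt s; rewrite ps Ok => /(_ isT) lt_s.
by case: (lt_upto_not_eq lt_s (stable _ (leqW N's)) (stable _ N's)).
Qed.

Lemma descent_theta : exists f, is_theta p pi (Tup f) /\ le_upto (dd p).-1 f (G 0).
Proof.
have [f [f_odd f_zero]] := theta_tuple_exists even_wins_descent.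
exists f; split.
  by right; split=> [ow|]; [apply: ow; apply: even_wins_descent | exists f].
apply: le_upto_window_bounds => [j Ej|j Oj jd]; first by apply: f_zero; left.
by apply: window_bound_theta_entry; apply: f_odd; move: jd; rewrite /dd /=.
Qed.

End Descent.
End Play.

Lemma mle_trans i a b c : mle i a b -> mle i b c -> mle i a c.
Proof.
rewrite /mle /mlt /meq; case: a b c => [|f] [|g] [|h] //=; try tauto.
exact: le_upto_trans.
Qed.

Lemma mlt_mle_trans i a b c : mlt i a b -> mle i b c -> mlt i a c.
Proof.
rewrite /mle /mlt /meq; case: a b c => [|f] [|g] [|h] //=; try tauto.
exact: lt_le_upto_trans.
Qed.

Lemma mle_TopL i m : mle i Top m -> m = Top.
Proof. by case: m => [|f] // [] []. Qed.

Lemma Prog_exists (V : finType) (p : V -> nat) rho v w : exists m, is_Prog p rho v w m.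
Proof.
case: (classic (exists f, inM p (Tup f) /\ prog_cond p rho v w (Tup f))) => [ex_tup|no_tup].
  have [f [Mf Cf] fmin] := le_upto_min_exists (dd p).-1 ex_tup.
  by exists (Tup f); split=> //; split=> // [[|g]] Mg Cg; [left | apply: fmin].
exists Top; split; first by split.
split; first by rewrite /prog_cond; case: (odd _); case: (rho w) => [|g] /=; by [left | right].
move=> [|g] Mg Cg; first by right.
by case: no_tup; exists g.
Qed.

Lemma progress_step (V : finType) (p : V -> nat) rho u w :
  (forall m, is_Prog p rho u w m -> mle (p u) m (rho u)) ->
  if odd (p u) then mlt (p u) (rho w) (rho u) \/ (rho u = Top /\ rho w = Top)
  else mle (p u) (rho w) (rho u).
Proof.
move=> le_Prog; have [m Pm] := Prog_exists p rho u w.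
have := le_Prog m Pm; case: Pm => _ [+ _]; rewrite /prog_cond.
case: (odd (p u)) => /= [[lt_m le_m|[-> ->] /mle_TopL]|le_wm le_m].
- by left; apply: mlt_mle_trans lt_m le_m.
- by right.
- exact: mle_trans le_wm le_m.
Qed.

Definition tup_of (m : mval) : nat -> nat := if m is Tup f then f else fun _ => 0.

Section Game.
Variables (V : finType) (E : rel V) (isEven : pred V) (p : V -> nat) (rho : V -> mval).

Definition progress_edge (u w : V) : Prop :=
  forall m, is_Prog p rho u w m -> mle (p u) m (rho u).

Lemma progress_strategy : game_progress_measure E isEven p rho ->
  exists sigma, positional_strategy_E E isEven sigma /\
    forall pi, is_play E pi -> consistent_E isEven sigma pi ->
      forall n, progress_edge (pi n) (pi n.+1).
Proof.
case=> _ [even_ok odd_ok].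
have witness u : exists w, isEven u -> E u w /\ progress_edge u w.
  case: (boolP (isEven u)) => [eu|_]; last by exists u.
  by have [w Ew ok] := even_ok u eu; exists w.
exists (fun u => proj1_sig (constructive_indefinite_description _ (witness u))).
split=> [u eu|pi play cons n]; first by case: constructive_indefinite_description => w /= /(_ eu) [].
case: (boolP (isEven (pi n))) => [eu|ou]; last exact: odd_ok ou _ (play n).
by rewrite (cons n eu); case: constructive_indefinite_description => w /= /(_ eu) [].
Qed.

Lemma play_value_le pi : (forall n, progress_edge (pi n) (pi n.+1)) ->
  exists t, is_theta p pi t /\ mle_full p t (rho (pi 0)).
Proof.
move=> prog; have step n := progress_step (prog n).
case r0: (rho (pi 0)) => [|f0].
  case: (classic (odd_wins p pi)) => [ow|eow]; first by exists Top; split; [left | right].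
  have [f [f_odd f_zero]] := theta_tuple_exists (NNPP _ eow).
  by exists (Tup f); split; [right; split=> //; exists f | left].
have tup n : rho (pi n) = Tup (tup_of (rho (pi n))).
  elim: n => [|n IH]; first by rewrite r0.
  move: (step n); rewrite IH; case: (rho (pi n.+1)) => [|g] //.
  by case: (odd _) => [[[]|[]]|[] []].
pose G n := tup_of (rho (pi n)).
have G_le n : le_upto (p (pi n)) (G n.+1) (G n).
  by move: (step n); rewrite (tup n) (tup n.+1); case: (odd _) => // -[lt|[]]; left.
have G_lt n : odd (p (pi n)) -> lt_upto (p (pi n)) (G n.+1) (G n).
  by move: (step n); rewrite (tup n) (tup n.+1) => + Oi; rewrite Oi => -[|[]].
have [f [theta_f le_f]] := descent_theta G_le G_lt.
by exists (Tup f); split=> //; move: le_f; rewrite /G r0.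
Qed.

End Game.

Theorem lemma1 (V : finType) (E : rel V) (isEven : pred V) (p : V -> nat)
  (E_total : forall v, exists w, E v w)
  (rho : V -> mval)
  (Hrho : game_progress_measure E isEven p rho) :
  forall v : V, exists sigma : V -> V,
    positional_strategy_E E isEven sigma /\
    forall pi : nat -> V,
      pi 0 = v -> is_play E pi -> consistent_E isEven sigma pi ->
      exists t, is_theta p pi t /\ mle_full p t (rho v).
Proof.
move=> v; have [sigma [sigma_pos sigma_prog]] := progress_strategy Hrho.
exists sigma; split=> // pi pi0 play cons; rewrite -pi0.
exact: play_value_le (sigma_prog pi play cons).
Qed.
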